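(* Counting the solutions of nondeterministic constraint logic (NCL) instances is not $\mathsf{\#P}$-complete under parsimonious reductions.
   Context: An NCL instance is a 3-regular undirected graph whose edges are colored blue or red, with each vertex incident to either exactly one or exactly three blue edges. A solution is an orientation of its edges such that every vertex has at least one incoming blue edge or at least two incoming red edges. A parsimonious reduction from counting problem $X$ to counting problem $Y$ is a polynomial-time transformation of instances of $X$ into instances of $Y$ with the same number of solutions. *)

From mathcomp Require Import all_boot.
Set Implicit Arguments. Unset Strict Implicit. Unset Printing Implicit Defensive.

Record ncl_graph := NclGraph {
  nv : nat;
  ne : nat;
  ends : 'I_ne -> 'I_nv * 'I_nv;
  blue : 'I_ne -> bool
}.

Definition incident (G : ncl_graph) (v : 'I_(nv G)) (e : 'I_(ne G)) : bool :=
  ((ends e).1 == v) || ((ends e).2 == v).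

Definition degree (G : ncl_graph) (v : 'I_(nv G)) : nat :=
  #|[set e | incident v e]|.

Definition blue_degree (G : ncl_graph) (v : 'I_(nv G)) : nat :=
  #|[set e | blue e && incident v e]|.

Definition ncl_instance (G : ncl_graph) : Prop :=
  [/\ 0 < nv G,
      (forall e : 'I_(ne G), (ends e).1 != (ends e).2),
      (forall v : 'I_(nv G), degree v = 3) &
      (forall v : 'I_(nv G), blue_degree v = 1 \/ blue_degree v = 3)].

(* An orientation: [o e = false] directs e from (ends e).1 to (ends e).2 (head = (ends e).2); [o e = true] reverses it. *)
Definition head (G : ncl_graph) (o : {ffun 'I_(ne G) -> bool}) (e : 'I_(ne G))
  : 'I_(nv G) := if o e then (ends e).1 else (ends e).2.

Definition in_blue (G : ncl_graph) (o : {ffun 'I_(ne G) -> bool}) (v : 'I_(nv G)) : nat :=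
  #|[set e | blue e && (head o e == v)]|.

Definition in_red (G : ncl_graph) (o : {ffun 'I_(ne G) -> bool}) (v : 'I_(nv G)) : nat :=
  #|[set e | ~~ blue e && (head o e == v)]|.

Definition ncl_solution (G : ncl_graph) (o : {ffun 'I_(ne G) -> bool}) : bool :=
  [forall v, (1 <= in_blue o v) || (2 <= in_red o v)].

Definition count_ncl (G : ncl_graph) : nat :=
  #|[set o : {ffun 'I_(ne G) -> bool} | ncl_solution o]|.

(* A CNF formula over [nvars] variables: a list of clauses, each a list of
   literals (variable, polarity). *)
Record cnf := Cnf {
  nvars : nat;
  clauses : seq (seq ('I_nvars * bool))
}.

Definition sat_assign (F : cnf) (a : {ffun 'I_(nvars F) -> bool}) : bool :=
  all (fun c => has (fun l => a l.1 == l.2) c) (clauses F).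

Definition count_sat (F : cnf) : nat :=
  #|[set a : {ffun 'I_(nvars F) -> bool} | sat_assign a]|.

From mathcomp Require Import all_boot.

Set Implicit Arguments. Unset Strict Implicit. Unset Printing Implicit Defensive.

(* An NCL instance never has exactly one solution. Given a solution o, either
   reversing a single edge e yields another solution, or for every e the only
   vertex this can break is the head of e, which must then have no blue in-edge
   besides e. In the latter case reversing all edges is again a solution: a
   vertex with no blue in-edge gains one of its blue edges, and a vertex whose
   only in-edge is a blue edge e gains its two other edges, which are either
   two red or two blue edges. Since a one-variable formula has exactly one
   satisfying assignment, no reduction can preserve the number of solutions. *)

Section Orientations.

Variable G : ncl_graph.
Implicit Types (o : {ffun 'I_(ne G) -> bool}) (e : 'I_(ne G)) (v : 'I_(nv G)).
Implicit Types (P : pred 'I_(ne G)).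

Definition flip o e : {ffun 'I_(ne G) -> bool} := [ffun e' => (e' == e) (+) o e'].

Definition reverse o : {ffun 'I_(ne G) -> bool} := [ffun e => ~~ o e].

Lemma flip_neq o e : flip o e != o.
Proof. by apply/eqP => /ffunP/(_ e); rewrite ffunE eqxx; case: (o e). Qed.

Lemma reverse_neq o e : reverse o != o.
Proof. by apply/eqP => /ffunP/(_ e); rewrite ffunE; case: (o e). Qed.

Lemma head_flip o e e' : e' != e -> head (flip o e) e' = head o e'.
Proof. by move=> ne_e'e; rewrite /head ffunE (negbTE ne_e'e). Qed.

Lemma head_reverse o e v : (ends e).1 != (ends e).2 ->
  (head (reverse o) e == v) = incident v e && (head o e != v).
Proof.
rewrite /head /reverse /incident ffunE; case: (ends e) => a b /= ne_ab.
case: (o e) => /=.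
- case: (b =P v) => [<-|] /=; first by rewrite ne_ab orbT.
  by rewrite orbF; case: (a =P v).
- case: (a =P v) => [<-|] /=; first by rewrite eq_sym ne_ab.
  by case: (b =P v).
Qed.

Lemma incident_head o e : incident (head o e) e.
Proof. by rewrite /incident /head; case: (o e); rewrite eqxx ?orbT. Qed.

Lemma in_flip_subset P o e v : v != head o e ->
  [set e' | P e' && (head o e' == v)] \subset
  [set e' | P e' && (head (flip o e) e' == v)].
Proof.
move=> v_ne; apply/subsetP => e'; rewrite !inE => /andP[-> /eqP head_e'].
have ne_e'e : e' != e by apply: contraNneq v_ne => e'e; rewrite -head_e' e'e.
by rewrite head_flip // head_e' eqxx.
Qed.

Lemma flip_unsolved_head o e : ncl_solution o -> ~~ ncl_solution (flip o e) ->
  in_blue (flip o e) (head o e) = 0.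
Proof.
move=> sol /forallPn[w unsat_w].
have w_head : w = head o e.
  apply/eqP; apply: contraR unsat_w => w_ne.
  have /orP[blue_in|red_in] := forallP sol w; apply/orP; [left|right].
  - by apply: leq_trans blue_in (subset_leq_card _); apply: in_flip_subset.
  - by apply: leq_trans red_in (subset_leq_card _); apply: in_flip_subset.
by move: unsat_w; rewrite -w_head negb_or -ltnNge ltnS leqn0 => /andP[/eqP].
Qed.

Lemma unflippable_blue_in o e e' : ncl_solution o -> ~~ ncl_solution (flip o e) ->
  e' != e -> head o e' = head o e -> ~~ blue e'.
Proof.
move=> sol unsol ne_e'e head_e'; apply/negP => blue_e'.
have /eqP := flip_unsolved_head sol unsol.
rewrite cards_eq0 => /eqP/setP/(_ e').
by rewrite !inE blue_e' head_flip // head_e' eqxx.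
Qed.

Lemma degree_split v :
  degree v = blue_degree v + #|[set e | ~~ blue e && incident v e]|.
Proof.
rewrite /degree -(cardsID [set e | blue e]) /blue_degree.
by congr (_ + _); apply: eq_card => e; rewrite !inE andbC.
Qed.

Lemma reverse_gains P o e v : (forall e, (ends e).1 != (ends e).2) ->
  (forall e', e' != e -> head o e' != v) ->
  #|[set e' | P e' && incident v e'] :\ e| <=
  #|[set e' | P e' && (head (reverse o) e' == v)]|.
Proof.
move=> loopless sole; apply/subset_leq_card/subsetP => e'.
rewrite !inE => /andP[ne_e'e /andP[-> inc_e']].
by rewrite head_reverse // inc_e' sole.
Qed.

Lemma reverse_solution o : ncl_instance G -> ncl_solution o ->
  (forall e, ~~ ncl_solution (flip o e)) -> ncl_solution (reverse o).
Proof.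
case=> _ loopless deg3 blue13 sol rigid; apply/forallP => v.
case: (boolP [exists e, blue e && (head o e == v)]) => [|no_blue_in].
  case/existsP => e /andP[blue_e /eqP head_e].
  have sole e' : e' != e -> head o e' != v.
    rewrite eq_sym => ne_ee'; apply/eqP => head_e'.
    have := unflippable_blue_in sol (rigid e') ne_ee' (etrans head_e (esym head_e')).
    by rewrite blue_e.
  case: (blue13 v) => blue_deg; apply/orP; [right|left].
  - have red_deg : #|[set e' | ~~ blue e' && incident v e']| = 2.
      by have := deg3 v; rewrite degree_split blue_deg => -[].
    apply: leq_trans _ (reverse_gains (fun e => ~~ blue e) loopless sole).
    by rewrite -red_deg (cardsD1 e) inE blue_e.
  - apply: leq_trans _ (reverse_gains (@blue G) loopless sole).
    have inc_e : incident v e by rewrite -head_e incident_head.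
    by have := cardsD1 e [set e' | blue e' && incident v e'];
      rewrite inE blue_e inc_e -/(blue_degree v) blue_deg add1n => -[<-].
have : 0 < blue_degree v by case: (blue13 v) => ->.
case/card_gt0P => e; rewrite inE => /andP[blue_e inc_e].
apply/orP; left; apply/card_gt0P; exists e.
rewrite inE blue_e head_reverse // inc_e /=.
by apply: contra no_blue_in => head_e; apply/existsP; exists e; rewrite blue_e.
Qed.

Lemma solution_not_unique o : ncl_instance G -> ncl_solution o ->
  exists2 o', ncl_solution o' & o' != o.
Proof.
move=> inst sol.
case: (boolP [exists e, ncl_solution (flip o e)]) => [/existsP[e sol_e]|/existsPn rigid].
  by exists (flip o e); last exact: flip_neq.
exists (reverse o); first exact: reverse_solution.
case: inst => nv_gt0 _ deg3 _.
have : 0 < degree (Ordinal nv_gt0) by rewrite deg3.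
by case/card_gt0P => e _; apply: reverse_neq e.
Qed.

Lemma count_ncl_neq1 : ncl_instance G -> count_ncl G != 1.
Proof.
move=> inst; apply/negP => /cards1P[o sols].
have : o \in [set o | ncl_solution o] by rewrite sols set11.
rewrite inE => /(solution_not_unique inst)[o' sol_o' ne_o'o].
have : o' \in [set o | ncl_solution o] by rewrite inE.
by rewrite sols inE (negbTE ne_o'o).
Qed.

End Orientations.

Definition unit_formula : cnf := @Cnf 1 [:: [:: (ord0, true)]].

Lemma count_sat_unit_formula : count_sat unit_formula = 1.
Proof.
apply/eqP/cards1P; exists [ffun _ => true]; apply/setP => a.
rewrite !inE /sat_assign /= andbT orbF.
apply/eqP/eqP => [a0|->]; last by rewrite ffunE.
by apply/ffunP => i; rewrite ffunE (ord1 i).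
Qed.

Theorem corollary19 :
  ~ exists f : cnf -> ncl_graph,
      (forall F, ncl_instance (f F)) /\
      (forall F, count_sat F = count_ncl (f F)).
Proof.
case=> f [f_inst f_count].
have := count_ncl_neq1 (f_inst unit_formula).
by rewrite -f_count count_sat_unit_formula.
Qed.
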